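(* Let $\mathcal{G}=(V,E_1,\dots,E_\tau)$ be a temporal graph with $E_1=E_2=\dots=E_\tau=:E$, and let $k\in\mathbb{N}_0$ with $\tau\ge k$. Then $(\mathcal{G},k,0)$ is a yes-instance of MinTimeline$_\infty$ (equivalently, of MinTimeline$_+$) if and only if the graph $G=(V,E)$ admits a $(\tau{:}\tau-k)$-coloring.
   Context: A temporal graph $\mathcal{G}=(V,(E_i)_{i\in[\tau]})$ consists of a finite vertex set $V$ and edge sets $E_1,\dots,E_\tau\subseteq\binom{V}{2}$. A $k$-activity timeline is a set $\mathcal{T}\subseteq\{(v,a,b)\in V\times[\tau]\times[\tau]\mid a\le b\}$ with at most $k$ triples $(v,\cdot,\cdot)$ for each $v\in V$; it covers $\mathcal{G}$ if for every $t\in[\tau]$ and $\{u,v\}\in E_t$ there is $(u,a,b)\in\mathcal{T}$ or $(v,a,b)\in\mathcal{T}$ with $a\le t\le b$. MinTimeline$_\infty$: given $(\mathcal{G},k,\ell)$, decide whether there is a $k$-activity timeline covering $\mathcal{G}$ with $\max_{(v,a,b)\in\mathcal{T}}(b-a)\le\ell$; MinTimeline$_+$: same with $\sum_{(v,a,b)\in\mathcal{T}}(b-a)\le\ell$. For a graph $G=(V,E)$ and integers $a\ge b\ge 0$, an $(a{:}b)$-coloring of $G$ is a function $c\colon V\to\binom{[a]}{b}$ (assigning each vertex a $b$-element subset of $[a]$) with $c(u)\cap c(v)=\emptyset$ for all $\{u,v\}\in E$. *)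

From mathcomp Require Import all_boot.
Set Implicit Arguments. Unset Strict Implicit. Unset Printing Implicit Defensive.

(* A temporal graph (V, (E_t)_{t in [tau]}): V a finType, Es t : rel V the
   edge set at time t (only t in 1..tau is relevant). Time stamps in [tau]
   = {1,..,tau} are represented by elements of 'I_tau.+1 with value >= 1. *)

Definition triple (V : finType) (tau : nat) := (V * 'I_tau.+1 * 'I_tau.+1)%type.

Definition tr_v {V : finType} {tau : nat} (x : triple V tau) : V := x.1.1.
Definition tr_a {V : finType} {tau : nat} (x : triple V tau) : nat := x.1.2.
Definition tr_b {V : finType} {tau : nat} (x : triple V tau) : nat := x.2.

Definition activity_timeline (V : finType) (tau k : nat)
  (T : {set triple V tau}) : Prop :=
  (forall x, x \in T -> 0 < tr_a x /\ tr_a x <= tr_b x) /\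
  (forall v : V, #|[set x in T | tr_v x == v]| <= k).

Definition covers (V : finType) (tau : nat) (Es : nat -> rel V)
  (T : {set triple V tau}) : Prop :=
  forall t, 1 <= t <= tau -> forall u v : V, Es t u v ->
    exists2 x, x \in T & (tr_v x = u \/ tr_v x = v) /\ tr_a x <= t <= tr_b x.

Definition MinTimelineInf (V : finType) (tau : nat) (Es : nat -> rel V)
  (k l : nat) : Prop :=
  exists T : {set triple V tau},
    [/\ activity_timeline k T, covers Es T &
        forall x, x \in T -> tr_b x - tr_a x <= l].

Definition MinTimelinePlus (V : finType) (tau : nat) (Es : nat -> rel V)
  (k l : nat) : Prop :=
  exists T : {set triple V tau},
    [/\ activity_timeline k T, covers Es T &
        \sum_(x in T) (tr_b x - tr_a x) <= l].

Definition ab_coloring (V : finType) (E : rel V) (a b : nat)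
  (c : V -> {set 'I_a}) : Prop :=
  (forall v, #|c v| = b) /\
  (forall u v, E u v -> [disjoint c u & c v]).

Definition ab_colorable (V : finType) (E : rel V) (a b : nat) : Prop :=
  exists c : V -> {set 'I_a}, ab_coloring E b c.

From mathcomp Require Import all_boot zify.

(* With length bound 0 every triple of a timeline is a single time point, so a
   timeline is just the choice, for each vertex v, of a set A v of at most k
   active times; since all snapshots equal E, it covers iff every edge uv has
   A u :|: A v = [tau].  Passing to complements, the idle sets have at least
   tau - k elements and are disjoint along edges; shrinking them to exactly
   tau - k elements yields a (tau : tau - k)-coloring, and conversely. *)

Set Implicit Arguments. Unset Strict Implicit.

Lemma exists_subset_card (T : finType) (A : {set T}) n :
  n <= #|A| -> exists2 B : {set T}, B \subset A & #|B| = n.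
Proof.
rewrite -bin_gt0 -cards_draws => /card_gt0P [B].
by rewrite inE => /andP [sBA /eqP cardB]; exists B.
Qed.

Definition activity_cover (V : finType) (E : rel V) (tau k : nat)
  (A : V -> {set 'I_tau}) : Prop :=
  (forall v, #|A v| <= k) /\ (forall u v, E u v -> A u :|: A v = setT).

Lemma ab_colorable_activity_cover (V : finType) (E : rel V) (tau k : nat) :
  k <= tau ->
  ab_colorable E tau (tau - k) <->
  exists A : V -> {set 'I_tau}, activity_cover E k A.
Proof.
move=> le_k_tau; split.
- case=> c [card_c disj_c]; exists (fun v => ~: c v); split=> [v | u v].
    by rewrite cardsCs setCK card_ord card_c subKn.
  by move=> /disj_c; rewrite -setI_eq0 -setCI => /eqP ->; rewrite setC0.
- case=> A [card_A cover_A].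
  have /fin_all_exists [c c_spec] :
      forall v, exists c : {set 'I_tau}, c \subset ~: A v /\ #|c| = tau - k.
    move=> v; have [|c sub_c card_c] := @exists_subset_card _ (~: A v) (tau - k).
      by rewrite cardsCs setCK card_ord leq_sub2l.
    by exists c.
  exists c; split=> [v | u v /cover_A cover_uv]; first by case: (c_spec v).
  rewrite -setI_eq0 -subset0 -setCT -cover_uv setCU.
  by apply: setISS; [case: (c_spec u) | case: (c_spec v)].
Qed.

Section PointTimelines.

Variables (V : finType) (tau : nat).

(* [i : 'I_tau] stands for the time stamp [i.+1] of [tau]. *)
Definition point_triple (v : V) (i : 'I_tau) : triple V tau :=
  (v, inord i.+1, inord i.+1).

Lemma point_triple_a v i : tr_a (point_triple v i) = i.+1.
Proof. by rewrite /tr_a /= inordK // ltnS ltn_ord. Qed.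

Lemma point_triple_b v i : tr_b (point_triple v i) = i.+1.
Proof. by rewrite /tr_b /= inordK // ltnS ltn_ord. Qed.

Lemma point_triple_inj v : injective (point_triple v).
Proof.
move=> i j /(congr1 tr_a); rewrite !point_triple_a => -[ij].
exact: val_inj.
Qed.

Lemma point_tripleE (x : triple V tau) (i : 'I_tau) :
  tr_a x = i.+1 -> tr_b x = i.+1 -> x = point_triple (tr_v x) i.
Proof.
case: x => [[v a] b]; rewrite /tr_a /tr_b /= => ax bx.
by congr (_, _, _); apply: val_inj; rewrite /= inordK ?ax ?bx // ltnS ltn_ord.
Qed.

Definition point_timeline (Es : nat -> rel V) (k : nat)
  (T : {set triple V tau}) : Prop :=
  [/\ activity_timeline k T, covers Es T & forall x, x \in T -> tr_a x = tr_b x].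

Lemma MinTimelineInf_point (Es : nat -> rel V) (k : nat) :
  MinTimelineInf tau Es k 0 <-> exists T, point_timeline Es k T.
Proof.
split=> -[T [tl_T cov_T len_T]]; exists T; split=> // x xT.
  by have := len_T x xT; have := proj1 tl_T x xT; lia.
by rewrite len_T ?subnn.
Qed.

Lemma MinTimelinePlus_point (Es : nat -> rel V) (k : nat) :
  MinTimelinePlus tau Es k 0 <-> exists T, point_timeline Es k T.
Proof.
split=> -[T [tl_T cov_T len_T]]; exists T; split=> //.
  move=> x xT; have : tr_b x - tr_a x <= 0.
    by apply: leq_trans len_T; rewrite (bigD1 x) //= leq_addr.
  by have := proj1 tl_T x xT; lia.
by rewrite big1 // => x xT; rewrite len_T ?subnn.
Qed.

Variables (E : rel V) (Es : nat -> rel V) (k : nat).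
Hypothesis Es_const : forall t, 1 <= t <= tau -> Es t = E.

Lemma activity_cover_point_timeline (A : V -> {set 'I_tau}) :
  activity_cover E k A -> exists T, point_timeline Es k T.
Proof.
case=> card_A cover_A.
exists [set point_triple v i | v : V, i : 'I_tau in A v]; split.
- split=> [x | v].
    by case/imset2P=> w i _ _ ->; rewrite point_triple_a point_triple_b.
  apply: leq_trans (card_A v); apply: leq_trans (leq_imset_card (point_triple v) _).
  apply: subset_leq_card; apply/subsetP=> x; rewrite !inE.
  by case/andP=> /imset2P [w i _ iA ->] /eqP <-; apply: imset_f.
- move=> t /andP [t_gt0 t_le] u v; rewrite Es_const ?t_gt0 ?t_le // => /cover_A cover_uv.
  have t_lt : t.-1 < tau by lia.
  pose i := Ordinal t_lt.
  have at_t w : tr_a (point_triple w i) <= t <= tr_b (point_triple w i).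
    by rewrite point_triple_a point_triple_b /=; lia.
  have : i \in A u :|: A v by rewrite cover_uv inE.
  case/setUP=> iA.
    by exists (point_triple u i); [apply: imset2_f | split; [left |]].
  by exists (point_triple v i); [apply: imset2_f | split; [right |]].
- by move=> x /imset2P [w i _ _ ->]; rewrite point_triple_a point_triple_b.
Qed.

Lemma point_timeline_activity_cover (T : {set triple V tau}) :
  point_timeline Es k T -> exists A : V -> {set 'I_tau}, activity_cover E k A.
Proof.
case=> -[_ card_T] cov_T point_T.
exists (fun v => point_triple v @^-1: T); split=> [v | u v uv].
  rewrite -(card_imset _ (@point_triple_inj v)); apply: leq_trans (card_T v).
  apply: subset_leq_card; apply/subsetP=> _ /imsetP [i iT ->].
  by rewrite inE in iT; rewrite !inE iT eqxx.
apply/setP=> i; rewrite !inE.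
have /cov_T : 1 <= i.+1 <= tau by rewrite /= ltn_ord.
rewrite Es_const ?ltn_ord // => /(_ u v uv) [x xT [vx /andP [ax xb]]].
have xE : x = point_triple (tr_v x) i.
  by apply: point_tripleE; have := point_T x xT; lia.
by rewrite xE in xT; case: vx => vx; rewrite -vx xT ?orbT.
Qed.

End PointTimelines.

Theorem mainTheorem2 (V : finType) (E : rel V) (Es : nat -> rel V)
  (tau k : nat) :
  irreflexive E -> symmetric E ->
  (forall t, 1 <= t <= tau -> Es t = E) ->
  k <= tau ->
  (MinTimelineInf tau Es k 0 <-> ab_colorable E tau (tau - k)) /\
  (MinTimelinePlus tau Es k 0 <-> ab_colorable E tau (tau - k)).
Proof.
move=> _ _ Es_const le_k_tau.
have point_colorable : (exists T : {set triple V tau}, point_timeline Es k T)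
                       <-> ab_colorable E tau (tau - k).
  split=> [[T point_T] | /(ab_colorable_activity_cover E le_k_tau) [A cover_A]].
    apply/(ab_colorable_activity_cover E le_k_tau).
    exact (point_timeline_activity_cover Es_const point_T).
  exact (activity_cover_point_timeline Es_const cover_A).
split; [apply: iff_trans (MinTimelineInf_point _ _ _) _ |
        apply: iff_trans (MinTimelinePlus_point _ _ _) _]; exact: point_colorable.
Qed.
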